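(* Let $p$ be any of the following patterns, or any pattern in the same symmetry class as one of them: $(123,\{0,1\},\{0,1\})$, $(123,\{0,1\},\{0,1,2\})$, $(123,\{0,1\},\{0,1,3\})$, $(123,\{0,1\},\{0,2,3\})$, $(123,\{0,1\},\{1,2,3\})$, $(123,\{0,2\},\{0,1,2\})$, $(123,\{0,2\},\{0,1,3\})$, $(123,\{0,2\},\{0,2,3\})$, $(123,\{0,2\},\{1,2,3\})$, $(123,\{1,2\},\{0,1,2\})$, $(123,\{1,2\},\{0,1,3\})$, $(123,\{0,1,2\},\{0,3\})$, $(123,\{0,3\},\{0,3\})$, $(123,\{0,3\},\{0,1,3\})$, $(132,\{0,1\},\{0,1,2\})$, $(132,\{0,1\},\{0,3\})$, $(132,\{0,1\},\{0,1,3\})$, $(132,\{0,1\},\{0,2,3\})$, $(132,\{0,1\},\{1,2,3\})$, $(132,\{0,2\},\{0,1,2\})$, $(132,\{0,2\},\{0,1,3\})$, $(132,\{0,2\},\{0,2,3\})$, $(132,\{0,2\},\{1,2,3\})$, $(132,\{1,2\},\{0,1,2\})$, $(132,\{1,2\},\{0,1,3\})$, $(132,\{1,2\},\{0,2,3\})$, $(132,\{1,2\},\{1,2,3\})$, $(132,\{0,1,2\},\{0,3\})$, $(132,\{0,1,2\},\{1,3\})$, $(132,\{0,1,2\},\{2,3\})$, $(132,\{0,3\},\{0,1,3\})$, $(132,\{0,3\},\{0,2,3\})$, $(132,\{0,3\},\{1,2,3\})$, $(132,\{1,3\},\{0,1,3\})$, $(132,\{1,3\},\{0,2,3\})$, $(132,\{1,3\},\{1,2,3\})$,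 $(132,\{0,1,3\},\{2,3\})$, $(132,\{2,3\},\{2,3\})$, $(132,\{2,3\},\{0,2,3\})$, $(132,\{2,3\},\{1,2,3\})$. Then for all $n\ge3$, $a_n(p)=n!-(n-2)!$.
   Context: For $n\ge1$, $\mathcal S_n$ is the set of permutations $\pi=\pi_1\cdots\pi_n$ of $[n]$. A bi-vincular pattern of length $k$ is a triple $p=(\sigma,X,Y)$ with $\sigma\in\mathcal S_k$ and $X,Y\subseteq\{0,1,\dots,k\}$. A permutation $\pi\in\mathcal S_n$ contains $p$ if there are indices $1\le i_1<\dots<i_k\le n$ such that $(\pi_{i_1},\dots,\pi_{i_k})$ is order-isomorphic to $\sigma$ and, letting $j_1<\dots<j_k$ be the values $\pi_{i_1},\dots,\pi_{i_k}$ sorted increasingly and setting $i_0=j_0=0$, $i_{k+1}=j_{k+1}=n+1$, one has $i_{x+1}=i_x+1$ for all $x\in X$ and $j_{y+1}=j_y+1$ for all $y\in Y$. Otherwise $\pi$ avoids $p$; $a_n(p)$ is the number of $\pi\in\mathcal S_n$ avoiding $p$. Symmetries: $p^{i}=(\sigma^{-1},Y,X)$, $p^{r}=(\sigma^{r},\{k-x:x\in X\},Y)$, $p^{c}=(\sigma^{c},X,\{k-y:y\in Y\})$ with $\sigma^r_j=\sigma_{k+1-j}$, $\sigma^c_j=k+1-\sigma_j$; the symmetry class of $p$ consists of all patterns obtained from $p$ by finitely many applications of these maps. *)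

From mathcomp Require Import all_boot all_order all_fingroup.
Set Implicit Arguments. Unset Strict Implicit. Unset Printing Implicit Defensive.

(* A bi-vincular pattern (sigma, X, Y) of length k, with sigma in S_k
   (permutation of 'I_k, i.e. values 0..k-1 standing for 1..k) and
   X, Y subsets of {0,...,k} = 'I_k.+1. *)
Record bvpat := BVPat {
  plen : nat;
  psig : 'S_plen;
  pX : {set 'I_plen.+1};
  pY : {set 'I_plen.+1} }.

Definition ext_seq (k n : nat) (s : seq nat) (x : nat) : nat :=
  if x == 0 then 0 else if x <= k then nth 0 s x.-1 else n.+1.

Definition occurrence (n : nat) (pi : 'S_n) (p : bvpat) (ii : {ffun 'I_(plen p) -> 'I_n}) : bool :=
  let k := plen p in
  let ps := [seq (nat_of_ord (ii a)).+1 | a <- enum 'I_k] in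
  let js := sort leq [seq (nat_of_ord (pi (ii a))).+1 | a <- enum 'I_k] in
  [&& [forall a : 'I_k, forall b : 'I_k, (a < b) ==> (ii a < ii b)],
      [forall a : 'I_k, forall b : 'I_k,
         (pi (ii a) < pi (ii b)) == (psig p a < psig p b)],
      [forall x in pX p, ext_seq k n ps x.+1 == (ext_seq k n ps x).+1] &
      [forall y in pY p, ext_seq k n js y.+1 == (ext_seq k n js y).+1]].

Definition contains (n : nat) (pi : 'S_n) (p : bvpat) : bool :=
  [exists ii : {ffun 'I_(plen p) -> 'I_n}, @occurrence n pi p ii].

Definition avoiders_count (p : bvpat) (n : nat) : nat :=
  #|[set pi : 'S_n | ~~ contains pi p]|.

Definition revperm (k : nat) : 'S_k := perm (@rev_ord_inj k).

Definition pat_i (p : bvpat) : bvpat :=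
  @BVPat (plen p) (psig p)^-1 (pY p) (pX p).
(* sigma^r_j = sigma_{k+1-j}; X -> {k - x} *)
Definition pat_r (p : bvpat) : bvpat :=
  @BVPat (plen p) (revperm (plen p) * psig p)%g
         [set rev_ord x | x in pX p] (pY p).
(* sigma^c_j = k+1-sigma_j; Y -> {k - y} *)
Definition pat_c (p : bvpat) : bvpat :=
  @BVPat (plen p) (psig p * revperm (plen p))%g
         (pX p) [set rev_ord y | y in pY p].

Inductive in_symclass (p : bvpat) : bvpat -> Prop :=
  | sc_refl : in_symclass p p
  | sc_i q : in_symclass p q -> in_symclass p (pat_i q)
  | sc_r q : in_symclass p q -> in_symclass p (pat_r q)
  | sc_c q : in_symclass p q -> in_symclass p (pat_c q).

Definition s123 : 'S_3 := 1%g.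
Definition s132 : 'S_3 := tperm (inord 1 : 'I_3) (inord 2 : 'I_3).

Definition mkset3 (s : seq nat) : {set 'I_4} := [set x : 'I_4 | nat_of_ord x \in s].
Definition mk3 (sg : 'S_3) (X Y : seq nat) : bvpat := @BVPat 3 sg (mkset3 X) (mkset3 Y).

Definition base_pats : seq bvpat :=
  [:: mk3 s123 [:: 0;1] [:: 0;1];
      mk3 s123 [:: 0;1] [:: 0;1;2];
      mk3 s123 [:: 0;1] [:: 0;1;3];
      mk3 s123 [:: 0;1] [:: 0;2;3];
      mk3 s123 [:: 0;1] [:: 1;2;3];
      mk3 s123 [:: 0;2] [:: 0;1;2];
      mk3 s123 [:: 0;2] [:: 0;1;3];
      mk3 s123 [:: 0;2] [:: 0;2;3];
      mk3 s123 [:: 0;2] [:: 1;2;3];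
      mk3 s123 [:: 1;2] [:: 0;1;2];
      mk3 s123 [:: 1;2] [:: 0;1;3];
      mk3 s123 [:: 0;1;2] [:: 0;3];
      mk3 s123 [:: 0;3] [:: 0;3];
      mk3 s123 [:: 0;3] [:: 0;1;3];
      mk3 s132 [:: 0;1] [:: 0;1;2];
      mk3 s132 [:: 0;1] [:: 0;3];
      mk3 s132 [:: 0;1] [:: 0;1;3];
      mk3 s132 [:: 0;1] [:: 0;2;3];
      mk3 s132 [:: 0;1] [:: 1;2;3];
      mk3 s132 [:: 0;2] [:: 0;1;2];
      mk3 s132 [:: 0;2] [:: 0;1;3];
      mk3 s132 [:: 0;2] [:: 0;2;3];
      mk3 s132 [:: 0;2] [:: 1;2;3];
      mk3 s132 [:: 1;2] [:: 0;1;2];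
      mk3 s132 [:: 1;2] [:: 0;1;3];
      mk3 s132 [:: 1;2] [:: 0;2;3];
      mk3 s132 [:: 1;2] [:: 1;2;3];
      mk3 s132 [:: 0;1;2] [:: 0;3];
      mk3 s132 [:: 0;1;2] [:: 1;3];
      mk3 s132 [:: 0;1;2] [:: 2;3];
      mk3 s132 [:: 0;3] [:: 0;1;3];
      mk3 s132 [:: 0;3] [:: 0;2;3];
      mk3 s132 [:: 0;3] [:: 1;2;3];
      mk3 s132 [:: 1;3] [:: 0;1;3];
      mk3 s132 [:: 1;3] [:: 0;2;3];
      mk3 s132 [:: 1;3] [:: 1;2;3];
      mk3 s132 [:: 0;1;3] [:: 2;3];
      mk3 s132 [:: 2;3] [:: 2;3];
      mk3 s132 [:: 2;3] [:: 0;2;3];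
      mk3 s132 [:: 2;3] [:: 1;2;3] ].

From mathcomp Require Import all_boot all_order all_fingroup.
From Stdlib Require List.
From mathcomp Require Import zify.
Set Implicit Arguments. Unset Strict Implicit. Unset Printing Implicit Defensive.

(* Inversion, reversal and complementation of permutations carry occurrences of p
   to occurrences of p^i, p^r and p^c, so a_n(p) only depends on the symmetry class
   of p.  For each base pattern, the permutations containing it are exactly those
   passing through two prescribed points (a family of (n-2)! permutations), or
   through one of n-2 mutually exclusive triples of prescribed points (n-2 families
   of (n-3)! permutations each).  Either way there are (n-2)! of them. *)

Definition adjacent (k n : nat) (s : seq nat) (x : nat) : bool :=
  ext_seq k n s x.+1 == (ext_seq k n s x).+1.

Lemma revpermE k (x : 'I_k) : revperm k x = rev_ord x.
Proof. by rewrite permE. Qed.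

Lemma revpermK k : (revperm k * revperm k)%g = 1%g.
Proof. by apply/permP => x; rewrite permM !revpermE rev_ordK perm1. Qed.

Lemma revpermV k : (revperm k)^-1%g = revperm k.
Proof. by rewrite -[LHS]mulg1 -(revpermK k) mulKg. Qed.

Lemma ltn_rev_ord k (x y : 'I_k) : (rev_ord x < rev_ord y) = (y < x).
Proof. by rewrite /=; have := ltn_ord x; have := ltn_ord y; lia. Qed.

Lemma nth_map_enum_ord k (f : 'I_k -> nat) i (ik : i < k) :
  nth 0 [seq f a | a <- enum 'I_k] i = f (Ordinal ik).
Proof.
rewrite (nth_map (Ordinal ik)) ?size_enum_ord //; congr f.
by apply: val_inj; rewrite /= nth_enum_ord.
Qed.

Lemma ext_seq_rev k n (g h : 'I_k -> nat) y :
  (forall a, g a <= n) -> (forall a, h a = n.+1 - g (rev_ord a)) -> y <= k.+1 ->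
  ext_seq k n [seq h a | a <- enum 'I_k] y =
  n.+1 - ext_seq k n [seq g a | a <- enum 'I_k] (k.+1 - y).
Proof.
move=> gn hE yk; rewrite /ext_seq.
have [->|y0] := eqVneq y 0; first by rewrite subn0 ltnn subnn.
case: ifP => yk'; last by have -> : k.+1 - y = 0 by lia.
have -> : (k.+1 - y == 0) = false by apply/negbTE; lia.
rewrite ifT; last by lia.
have ik : y.-1 < k by lia.
have jk : (k.+1 - y).-1 < k by lia.
rewrite (nth_map_enum_ord _ ik) (nth_map_enum_ord _ jk) hE.
by congr (_ - g _); apply: val_inj => /=; lia.
Qed.

Lemma adjacent_rev k n (g h : 'I_k -> nat) x :
  (forall a, g a <= n) -> (forall a, h a = n.+1 - g (rev_ord a)) -> x <= k ->
  adjacent k n [seq h a | a <- enum 'I_k] (k - x) =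
  adjacent k n [seq g a | a <- enum 'I_k] x.
Proof.
move=> gn hE xk; rewrite /adjacent !(ext_seq_rev gn hE); try lia.
have -> : k.+1 - (k - x).+1 = x by lia.
have -> : k.+1 - (k - x) = x.+1 by lia.
have ext_le y : ext_seq k n [seq g a | a <- enum 'I_k] y <= n.+1.
  rewrite /ext_seq; case: eqP => // y0; case: ifP => // yk.
  have ik : y.-1 < k by lia.
  by rewrite (nth_map_enum_ord _ ik); exact: leqW (gn _).
move: (ext_le x) (ext_le x.+1).
move: (ext_seq _ _ _ x) (ext_seq _ _ _ x.+1) => a b ha hb.
by apply/eqP/eqP; lia.
Qed.

Lemma incr_ltn_mono k (f : 'I_k -> nat) :
  [forall a : 'I_k, forall b : 'I_k, (a < b) ==> (f a < f b)] ->
  forall a b : 'I_k, (f a < f b) = (a < b).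
Proof.
move=> /forallP incr a b.
have lt_f (c d : 'I_k) : c < d -> f c < f d by move=> cd; exact: (implyP (forallP (incr c) d)).
case: (ltngtP a b) => [/lt_f // | /lt_f/ltnW/leq_gtF // | /val_inj ->]; exact: ltnn.
Qed.

Lemma perm_enum_map_perm (T : finType) (s : {perm T}) : perm_eq (map s (enum T)) (enum T).
Proof.
apply: uniq_perm; rewrite ?(map_inj_uniq (@perm_inj _ _)) ?enum_uniq // => x.
by rewrite -{1}(permKV s x) map_f ?mem_enum.
Qed.

Lemma sort_map_order_iso k (sg : 'S_k) (f : 'I_k -> nat) :
  (forall a b, (f a < f b) = (sg a < sg b)) ->
  sort leq [seq f a | a <- enum 'I_k] = [seq f (sg^-1 r)%g | r <- enum 'I_k].
Proof.
move=> iso; apply: (sorted_eq leq_trans anti_leq); first exact: sort_sorted leq_total _.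
  have : sorted (relpre val ltn) (enum 'I_k).
    by rewrite -sorted_map val_enum_ord iota_ltn_sorted.
  by apply: homo_sorted => a b /= ab; apply: ltnW; rewrite iso !permKV.
rewrite perm_sort (map_comp f (fun r => sg^-1 r)%g).
by apply: perm_map; rewrite perm_sym perm_enum_map_perm.
Qed.

Lemma order_iso_incr k (sg : 'S_k) (f : 'I_k -> nat) :
  [forall a : 'I_k, forall b : 'I_k, (f a < f b) == (sg a < sg b)] =
  [forall r : 'I_k, forall s : 'I_k, (r < s) ==> (f (sg^-1 r)%g < f (sg^-1 s)%g)].
Proof.
apply/forallP/forallP => [iso r | incr a].
  by apply/forallP => s; apply/implyP; rewrite (eqP (forallP (iso _) _)) !permKV.
apply/forallP => b; apply/eqP.
have /incr_ltn_mono mono := introT forallP incr.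
by rewrite -(mono (sg a) (sg b)) !permK.
Qed.

Section Occurrences.

Variables (n k : nat) (pi : 'S_n) (sg : 'S_k) (X Y : {set 'I_k.+1}).
Variable ii : {ffun 'I_k -> 'I_n}.
Hypothesis occ : @occurrence n pi (BVPat sg X Y) ii.

Let values_iso a b : (pi (ii a) < pi (ii b)) = (sg a < sg b).
Proof. by case/and4P: occ => _ /forallP iso _ _; exact: eqP (forallP (iso a) b). Qed.

Let values_sorted :
  sort leq [seq (pi (ii a)).+1 | a <- enum 'I_k] =
  [seq (pi (ii (sg^-1 r)%g)).+1 | r <- enum 'I_k].
Proof. by apply: sort_map_order_iso => a b; rewrite ltnS values_iso. Qed.

Lemma occurrence_inv :
  @occurrence n pi^-1 (pat_i (BVPat sg X Y)) [ffun r => pi (ii (sg^-1 r)%g)].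
Proof.
case/and4P: occ => incr _ adjX adjY; have mono := incr_ltn_mono incr.
apply/and4P; split.
- apply/forallP => a; apply/forallP => b; apply/implyP => ab.
  by rewrite !ffunE values_iso !permKV.
- by apply/forallP => a; apply/forallP => b; rewrite !ffunE !permK mono.
- by under eq_map do rewrite ffunE; rewrite -values_sorted.
- rewrite (sort_map_order_iso (sg := sg^-1%g)); last first.
    by move=> a b; rewrite !ffunE !permK ltnS mono.
  by under eq_map do rewrite ffunE invgK !permK.
Qed.

Lemma occurrence_rev :
  @occurrence n (revperm n * pi)%g (pat_r (BVPat sg X Y)) [ffun a => rev_ord (ii (rev_ord a))].
Proof.
case/and4P: occ => incr _ adjX adjY; have mono := incr_ltn_mono incr.
apply/and4P; split.
- apply/forallP => a; apply/forallP => b; apply/implyP => ab.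
  by rewrite !ffunE ltn_rev_ord mono ltn_rev_ord.
- apply/forallP => a; apply/forallP => b.
  by rewrite !ffunE !permM !revpermE !rev_ordK values_iso.
- apply/forallP => x; apply/implyP => /imsetP [y yX ->].
  rewrite (_ : nat_of_ord (rev_ord y) = k - y) ?subSS // -/(adjacent _ _ _ _).
  rewrite (@adjacent_rev _ _ (fun a => (nat_of_ord (ii a)).+1)) //.
  + exact: (implyP (forallP adjX y)).
  + by move=> a; rewrite ffunE /=; have := ltn_ord (ii (rev_ord a)); lia.
  + exact: ltn_ord y.
- rewrite (_ : sort leq _ = sort leq [seq (nat_of_ord (pi (ii a))).+1 | a <- enum 'I_k]) //.
  apply/perm_sortP; [exact: leq_total | exact: leq_trans | exact: anti_leq |].
  under eq_map do rewrite ffunE permM revpermE rev_ordK.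
  rewrite (map_comp (fun a => (nat_of_ord (pi (ii a))).+1) (@rev_ord k)).
  by apply: perm_map; rewrite -(eq_map (@revpermE k)); apply: perm_enum_map_perm.
Qed.

Lemma occurrence_compl :
  @occurrence n (pi * revperm n)%g (pat_c (BVPat sg X Y)) ii.
Proof.
case/and4P: occ => incr _ adjX adjY.
apply/and4P; split => //.
- apply/forallP => a; apply/forallP => b.
  by rewrite !permM !revpermE !ltn_rev_ord values_iso.
- rewrite (sort_map_order_iso (sg := (sg * revperm k)%g)); last first.
    by move=> a b; rewrite ltnS !permM !revpermE !ltn_rev_ord values_iso.
  apply/forallP => x; apply/implyP => /imsetP [y yY ->].
  rewrite (_ : nat_of_ord (rev_ord y) = k - y) ?subSS // -/(adjacent _ _ _ _).
  rewrite (@adjacent_rev _ _ (fun r => (nat_of_ord (pi (ii (sg^-1 r)%g))).+1)) //.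
  + by move: (implyP (forallP adjY y)); rewrite values_sorted; apply.
  + move=> r; rewrite invMg revpermV !permM !revpermE /=.
    by case: (pi _) => v /= vn; lia.
  + exact: ltn_ord y.
Qed.

End Occurrences.

Lemma contains_inv n (pi : 'S_n) p : contains pi p -> contains pi^-1 (pat_i p).
Proof.
case: p => k sg X Y /existsP [ii occ]; apply/existsP.
by exists [ffun r => pi (ii (sg^-1 r)%g)]; apply: occurrence_inv.
Qed.

Lemma contains_rev n (pi : 'S_n) p : contains pi p -> contains (revperm n * pi)%g (pat_r p).
Proof.
case: p => k sg X Y /existsP [ii occ]; apply/existsP.
by exists [ffun a => rev_ord (ii (rev_ord a))]; apply: occurrence_rev.
Qed.

Lemma contains_compl n (pi : 'S_n) p : contains pi p -> contains (pi * revperm n)%g (pat_c p).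
Proof.
by case: p => k sg X Y /existsP [ii occ]; apply/existsP; exists ii; apply: occurrence_compl.
Qed.

Lemma imset_rev_ordK k (A : {set 'I_k}) : [set rev_ord x | x in [set rev_ord x | x in A]] = A.
Proof. by rewrite -imset_comp (eq_imset _ (@rev_ordK k)) imset_id. Qed.

Lemma pat_iK : involutive pat_i.
Proof. by case=> k sg X Y; rewrite /pat_i /= invgK. Qed.

Lemma pat_rK : involutive pat_r.
Proof. by case=> k sg X Y; rewrite /pat_r /= mulgA revpermK mul1g imset_rev_ordK. Qed.

Lemma pat_cK : involutive pat_c.
Proof. by case=> k sg X Y; rewrite /pat_c /= -mulgA revpermK mulg1 imset_rev_ordK. Qed.

Lemma avoiders_count_sym (f : forall n, 'S_n -> 'S_n) (g : bvpat -> bvpat) :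
  (forall n, involutive (f n)) -> involutive g ->
  (forall n (pi : 'S_n) p, contains pi p -> contains (f n pi) (g p)) ->
  forall p n, avoiders_count (g p) n = avoiders_count p n.
Proof.
move=> fK gK fg p n.
have contE pi : contains pi (g p) = contains (f n pi) p.
  by apply/idP/idP => [/fg | /fg]; rewrite ?gK ?fK.
rewrite /avoiders_count -[RHS](card_preimset _ (inv_inj (fK n))).
by apply: eq_card => pi; rewrite !inE contE.
Qed.

Lemma avoiders_count_symclass b p n :
  in_symclass b p -> avoiders_count p n = avoiders_count b n.
Proof.
have r_inv m : involutive (fun pi : 'S_m => revperm m * pi)%g.
  by move=> pi; rewrite mulgA revpermK mul1g.
have c_inv m : involutive (fun pi : 'S_m => pi * revperm m)%g.
  by move=> pi; rewrite -mulgA revpermK mulg1.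
elim=> [|q _ IH|q _ IH|q _ IH] //.
- by rewrite (avoiders_count_sym (fun m => @invgK _) pat_iK contains_inv).
- by rewrite (avoiders_count_sym r_inv pat_rK contains_rev).
- by rewrite (avoiders_count_sym c_inv pat_cK contains_compl).
Qed.

Lemma card_exists_disjoint (I T : finType) (P : I -> pred T) :
  (forall x t t', P t x -> P t' x -> t = t') ->
  #|[set x | [exists t, P t x]]| = \sum_t #|[set x | P t x]|.
Proof.
move=> P_disj.
have cardE (Q : pred T) : #|[set x | Q x]| = \sum_x (Q x : nat).
  by rewrite -sum1_card big_mkcond; apply: eq_bigr => x _; rewrite inE; case: (Q x).
under eq_bigr do rewrite cardE.
rewrite cardE exchange_big /=; apply: eq_bigr => x _.
case: existsP => [[t0 Pt0] | noP].
  rewrite (bigD1 t0) //= Pt0 big1 // => t t_t0.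
  by case: (boolP (P t x)) => // Pt; rewrite (P_disj _ _ _ Pt Pt0) eqxx in t_t0.
by rewrite big1 // => t _; case: (boolP (P t x)) => // Pt; case: noP; exists t.
Qed.

(* Positions and values of pins are 0-based, like those of 'S_n. *)
Definition pinned n (pi : 'S_n) (s : seq (nat * nat)) : bool :=
  all (fun iv => [exists x : 'I_n, (x == iv.1 :> nat) && (pi x == iv.2 :> nat)]) s.

Definition pins_valid n (s : seq (nat * nat)) : bool :=
  [&& uniq (unzip1 s), uniq (unzip2 s) & all (fun iv => (iv.1 < n) && (iv.2 < n)) s].

Lemma perm_unpins n s : pins_valid n s -> exists h : 'S_n,
  forall iv, iv \in s -> forall x : 'I_n, x = iv.2 :> nat -> h x = iv.1 :> nat.
Proof.
elim: s => [|[i v] s IH]; first by exists 1%g.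
case/and3P => /= /andP [i_s uniq1] /andP [v_s uniq2] /andP [/andP [i_n v_n] s_n].
have [h hE] := IH (introT and3P (And3 uniq1 uniq2 s_n)).
exists (h * tperm (h (Ordinal v_n)) (Ordinal i_n))%g => iv; rewrite inE.
case/orP => [/eqP -> | iv_s] x xE.
  by rewrite (_ : x = Ordinal v_n) ?permM ?tpermL //; apply: val_inj.
rewrite permM tpermD; first exact: hE.
- apply: contraNneq v_s => /perm_inj/(congr1 val) /= ->.
  by rewrite xE map_f.
- apply: contraNneq i_s => /(congr1 val) /= ->.
  by rewrite (hE _ iv_s _ xE) map_f.
Qed.

Lemma card_set_val_in n (L : seq nat) : uniq L -> all (fun x => x < n) L ->
  #|[set x : 'I_n | nat_of_ord x \in L]| = size L.
Proof.
move=> uniqL L_n.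
have -> : [set x : 'I_n | nat_of_ord x \in L] = [set x in (pmap insub L : seq 'I_n)].
  by apply/setP => x; rewrite !inE mem_pmap_sub.
rewrite cardsE (card_uniqP (pmap_sub_uniq 'I_n uniqL)) size_pmap_sub.
by apply/eqP; rewrite -all_count.
Qed.

Lemma card_pinned n s : pins_valid n s -> #|[set pi : 'S_n | pinned pi s]| = (n - size s)`!.
Proof.
move=> s_valid; have [h hE] := perm_unpins s_valid.
case/and3P: s_valid => uniq1 _ s_n.
pose A := [set x : 'I_n | nat_of_ord x \in unzip1 s].
have cardA : #|A| = size s.
  rewrite card_set_val_in ?size_map // all_map.
  by apply: sub_all s_n => iv /andP [].
have -> : (n - size s)`! = #|perm_on (~: A)|.
  by rewrite card_perm -cardA -{1}(card_ord n) -(cardsC A) addKn.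
(* [pi] pins [s] exactly when [pi * h] fixes every pinned position. *)
rewrite -[RHS]cardsE -[RHS](card_preimset _ (mulIg h)); apply: eq_card => pi; rewrite !inE.
apply/allP/subsetP => [pinned_s x | fix_A iv iv_s].
- rewrite !inE permM; apply: contraNN => /mapP [iv iv_s xE].
  have /existsP [y /andP [/eqP yE /eqP piyE]] := pinned_s iv iv_s.
  have -> : x = y by apply: val_inj; rewrite /= yE.
  by apply/eqP/val_inj; rewrite /= (hE _ iv_s _ piyE).
- have /andP [i_n v_n] := allP s_n iv iv_s.
  have i_A : Ordinal i_n \in A by rewrite inE; apply: map_f.
  have /eqP fix_i : (pi * h)%g (Ordinal i_n) == Ordinal i_n.
    by apply/negPn/negP => /fix_A; rewrite inE i_A.
  apply/existsP; exists (Ordinal i_n); rewrite eqxx /=.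
  suff -> : pi (Ordinal i_n) = Ordinal v_n by [].
  apply: (@perm_inj _ h); apply: val_inj.
  by rewrite -permM fix_i /= (hE _ iv_s).
Qed.

(* [v1 < v2 < v3] are the values of the occurrence sorted increasingly, not read
   from left to right. *)
Definition occ3 n (X Y : seq nat) (i1 i2 i3 v1 v2 v3 : nat) : bool :=
  [&& i1 < i2 < i3, v1 < v2 < v3,
      all (adjacent 3 n [:: i1.+1; i2.+1; i3.+1]) [seq x <- X | x < 4] &
      all (adjacent 3 n [:: v1.+1; v2.+1; v3.+1]) [seq y <- Y | y < 4]].

Notation o0 := (inord 0 : 'I_3).
Notation o1 := (inord 1 : 'I_3).
Notation o2 := (inord 2 : 'I_3).

Lemma forall_ord3 (P : pred 'I_3) : [forall a, P a] = [&& P o0, P o1 & P o2].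
Proof.
apply/forallP/and3P => [P_all | [P0 P1 P2] [[|[|[|a]]] a3]] //.
- by rewrite (_ : Ordinal a3 = o0) //; apply: val_inj; rewrite /= inordK.
- by rewrite (_ : Ordinal a3 = o1) //; apply: val_inj; rewrite /= inordK.
- by rewrite (_ : Ordinal a3 = o2) //; apply: val_inj; rewrite /= inordK.
Qed.

Lemma incr_ord3 (f : 'I_3 -> nat) :
  [forall a : 'I_3, forall b : 'I_3, (a < b) ==> (f a < f b)] = (f o0 < f o1 < f o2).
Proof.
rewrite forall_ord3 !forall_ord3 !inordK //=.
by move: (f o0) (f o1) (f o2) => a b c; apply/idP/idP; lia.
Qed.

Lemma enum_ord3 : enum 'I_3 = [:: o0; o1; o2].
Proof. by apply: (inj_map val_inj); rewrite val_enum_ord /= !inordK. Qed.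

Lemma forall_mkset3 X (P : nat -> bool) :
  [forall x in mkset3 X, P (nat_of_ord x)] = all P [seq x <- X | x < 4].
Proof.
apply/forallP/allP => [P_X x | P_X x].
  by rewrite mem_filter => /andP [x4 xX]; have /implyP := P_X (Ordinal x4); rewrite inE; apply.
by apply/implyP; rewrite inE => xX; apply: P_X; rewrite mem_filter xX ltn_ord.
Qed.

Lemma occurrence_mk3 n (pi : 'S_n) sg X Y (ii : {ffun 'I_3 -> 'I_n}) :
  @occurrence n pi (mk3 sg X Y) ii =
  occ3 n X Y (ii o0) (ii o1) (ii o2)
    (pi (ii (sg^-1 o0)%g)) (pi (ii (sg^-1 o1)%g)) (pi (ii (sg^-1 o2)%g)).
Proof.
have isoE := order_iso_incr sg (fun a => pi (ii a)); rewrite incr_ord3 in isoE.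
rewrite /occurrence /occ3 /= incr_ord3 isoE; congr andb; apply: andb_id2l => incr.
have iso : [forall a, forall b, (pi (ii a) < pi (ii b)) == (sg a < sg b)] by rewrite isoE.
rewrite (sort_map_order_iso (sg := sg)); last first.
  by move=> a b; rewrite ltnS; move/forallP/(_ a)/forallP/(_ b)/eqP: iso.
by rewrite !enum_ord3 (forall_mkset3 X (adjacent _ _ _)) (forall_mkset3 Y (adjacent _ _ _)).
Qed.

Lemma exists_ffun_ord3 n (P : 'I_n -> 'I_n -> 'I_n -> bool) :
  [exists ii : {ffun 'I_3 -> 'I_n}, P (ii o0) (ii o1) (ii o2)] =
  [exists i1, exists i2, exists i3, P i1 i2 i3].
Proof.
apply/existsP/existsP => [[ii Pii] | [i1 /existsP [i2 /existsP [i3 Pi]]]].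
  by exists (ii o0); apply/existsP; exists (ii o1); apply/existsP; exists (ii o2).
exists [ffun a : 'I_3 => if a == o0 then i1 else if a == o1 then i2 else i3].
by rewrite !ffunE !eqxx -!val_eqE /= !inordK.
Qed.

Lemma contains_123 n (pi : 'S_n) X Y :
  contains pi (mk3 s123 X Y) =
  [exists i1 : 'I_n, exists i2 : 'I_n, exists i3 : 'I_n,
     occ3 n X Y i1 i2 i3 (pi i1) (pi i2) (pi i3)].
Proof.
rewrite -(exists_ffun_ord3 (fun i1 i2 i3 => occ3 n X Y i1 i2 i3 (pi i1) (pi i2) (pi i3))).
by apply: eq_existsb => ii; rewrite occurrence_mk3 /s123 invg1 !perm1.
Qed.

Lemma contains_132 n (pi : 'S_n) X Y :
  contains pi (mk3 s132 X Y) =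
  [exists i1 : 'I_n, exists i2 : 'I_n, exists i3 : 'I_n,
     occ3 n X Y i1 i2 i3 (pi i1) (pi i3) (pi i2)].
Proof.
rewrite -(exists_ffun_ord3 (fun i1 i2 i3 => occ3 n X Y i1 i2 i3 (pi i1) (pi i3) (pi i2))).
apply: eq_existsb => ii; rewrite occurrence_mk3 /s132 tpermV tpermL tpermR tpermD //;
  by rewrite -val_eqE /= !inordK.
Qed.

Definition avoiders_nfact_sub (p : bvpat) : Prop :=
  forall n, 3 <= n -> avoiders_count p n = n`! - (n - 2)`!.

Lemma avoiders_count_compl n p :
  avoiders_count p n = n`! - #|[set pi : 'S_n | contains pi p]|.
Proof.
rewrite /avoiders_count -(card_Sn n) -(cardsC [set pi : 'S_n | contains pi p]) addKn.
by apply: eq_card => pi; rewrite !inE.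
Qed.

Lemma avoiders_two_pins p (s : nat -> seq (nat * nat)) :
  (forall n, 3 <= n -> pins_valid n (s n)) -> (forall n, size (s n) = 2) ->
  (forall n, 3 <= n -> forall pi : 'S_n, contains pi p = pinned pi (s n)) ->
  avoiders_nfact_sub p.
Proof.
move=> s_valid s_size contE n n3; rewrite avoiders_count_compl -(s_size n).
by rewrite -card_pinned ?s_valid //; congr (_ - _); apply: eq_card => pi; rewrite !inE contE.
Qed.

(* The hypotheses on [key] make the families disjoint: no permutation passes through
   two distinct key pins sharing a position or a value. *)
Lemma avoiders_pin_family p
    (key : nat -> nat -> nat * nat) (rest : nat -> nat -> seq (nat * nat)) :
  (forall n, injective (key n)) ->
  (forall n t t', (key n t).1 = (key n t').1 \/ (key n t).2 = (key n t').2) ->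
  (forall n t, 3 <= n -> t < n - 2 -> pins_valid n (key n t :: rest n t)) ->
  (forall n t, size (rest n t) = 2) ->
  (forall n, 3 <= n -> forall pi : 'S_n,
     contains pi p = [exists t : 'I_(n - 2), pinned pi (key n t :: rest n t)]) ->
  avoiders_nfact_sub p.
Proof.
move=> key_inj key_const S_valid rest_size contE n n3.
have S_disj (pi : 'S_n) (t t' : 'I_(n - 2)) :
    pinned pi (key n t :: rest n t) -> pinned pi (key n t' :: rest n t') -> t = t'.
  case/andP => /existsP [x /andP [/eqP xE /eqP pixE]] _.
  case/andP => /existsP [y /andP [/eqP yE /eqP piyE]] _.
  apply/val_inj/(key_inj n); move: (key_const n t t').
  case: (key n t) (key n t') xE pixE yE piyE => [i v] [i' v'] /= <- <- <- <- [xy | pixy].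
    by rewrite (val_inj xy).
  by rewrite (perm_inj (val_inj pixy)).
rewrite avoiders_count_compl.
have -> : #|[set pi : 'S_n | contains pi p]| =
          #|[set pi : 'S_n | [exists t : 'I_(n - 2), pinned pi (key n t :: rest n t)]]|.
  by apply: eq_card => pi; rewrite !inE contE.
rewrite card_exists_disjoint // (eq_bigr (fun _ => (n - 3)`!)) => [|t _]; last first.
  by rewrite card_pinned ?S_valid //= rest_size; congr _`!; lia.
by rewrite sum_nat_const card_ord (_ : n - 2 = (n - 3).+1) ?factS //; lia.
Qed.

Lemma exists_pos n k : k < n -> exists w : 'I_n, w = k :> nat.
Proof. by move=> kn; exists (Ordinal kn). Qed.

Lemma exists_val n (pi : 'S_n) v : v < n -> exists w : 'I_n, pi w = v :> nat.
Proof. by move=> vn; exists (pi^-1 (Ordinal vn))%g; rewrite permKV. Qed.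

Lemma perm_val_eqE n (pi : 'S_n) (x y : 'I_n) : x = y :> nat <-> pi x = pi y :> nat.
Proof. by split=> [/val_inj -> // | /val_inj/perm_inj ->]. Qed.

Lemma pinned_consP n (pi : 'S_n) i v s :
  reflect (exists2 x : 'I_n, x = i :> nat /\ pi x = v :> nat & pinned pi s)
          (pinned pi ((i, v) :: s)).
Proof.
apply: (iffP andP) => [[/existsP [x /andP [/eqP xi /eqP pixv]] pins] | [x [xi pixv] pins]].
  by exists x.
by split=> //; apply/existsP; exists x; rewrite xi pixv !eqxx.
Qed.

(* Once occurrences and pins are unfolded, each case is linear arithmetic on positions
   and values; [perm_val_eqE] feeds the injectivity of [pi] to [lia]. *)
Ltac intro_occ3 pi i1 i2 i3 :=
  case/existsP => i1 /existsP [i2 /existsP [i3]]; rewrite /occ3 /adjacent /ext_seq /=;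
  have := ltn_ord i1; have := ltn_ord i2; have := ltn_ord i3;
  have := ltn_ord (pi i1); have := ltn_ord (pi i2); have := ltn_ord (pi i3); move=> *.

Ltac pinned_by i1 i2 i3 :=
  rewrite /pinned /=; repeat (apply/andP; split); try done;
  apply/existsP; first [exists i1; lia | exists i2; lia | exists i3; lia].

Ltac occ3_at pi a b c :=
  apply/existsP; exists a; apply/existsP; exists b; apply/existsP; exists c;
  have := perm_val_eqE pi a b; have := perm_val_eqE pi a c; have := perm_val_eqE pi b c;
  have := ltn_ord a; have := ltn_ord b; have := ltn_ord c;
  have := ltn_ord (pi a); have := ltn_ord (pi b); have := ltn_ord (pi c);
  rewrite /occ3 /adjacent /ext_seq /=; lia.

Ltac pins_ok := rewrite /pins_valid /= ?inE; lia.

Lemma avoiders_123_01_01 : avoiders_nfact_sub (mk3 s123 [:: 0; 1] [:: 0; 1]).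
Proof.
apply: (avoiders_two_pins (s := fun n => [:: (0, 0); (1, 1)])) => // n n3.
  by pins_ok.
move=> pi; rewrite contains_123; apply/idP/idP.
- by intro_occ3 pi i1 i2 i3; pinned_by i1 i2 i3.
- case/pinned_consP => x1 [? ?] /pinned_consP [x2 [? ?] _].
  have [x3 ?] := @exists_pos n 2 ltac:(lia).
  by occ3_at pi x1 x2 x3.
Qed.

Lemma avoiders_123_01_012 : avoiders_nfact_sub (mk3 s123 [:: 0; 1] [:: 0; 1; 2]).
Proof.
apply: (avoiders_two_pins (s := fun n => [:: (0, 0); (1, 1)])) => // n n3.
  by pins_ok.
move=> pi; rewrite contains_123; apply/idP/idP.
- by intro_occ3 pi i1 i2 i3; pinned_by i1 i2 i3.
- case/pinned_consP => x1 [? ?] /pinned_consP [x2 [? ?] _].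
  have [x3 ?] := @exists_val n pi 2 ltac:(lia).
  by occ3_at pi x1 x2 x3.
Qed.

Lemma avoiders_123_01_013 : avoiders_nfact_sub (mk3 s123 [:: 0; 1] [:: 0; 1; 3]).
Proof.
apply: (avoiders_two_pins (s := fun n => [:: (0, 0); (1, 1)])) => // n n3.
  by pins_ok.
move=> pi; rewrite contains_123; apply/idP/idP.
- by intro_occ3 pi i1 i2 i3; pinned_by i1 i2 i3.
- case/pinned_consP => x1 [? ?] /pinned_consP [x2 [? ?] _].
  have [x3 ?] := @exists_val n pi (n - 1) ltac:(lia).
  by occ3_at pi x1 x2 x3.
Qed.

Lemma avoiders_123_01_023 : avoiders_nfact_sub (mk3 s123 [:: 0; 1] [:: 0; 2; 3]).
Proof.
apply: (avoiders_two_pins (s := fun n => [:: (0, 0); (1, n - 2)])) => // n n3.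
  by pins_ok.
move=> pi; rewrite contains_123; apply/idP/idP.
- by intro_occ3 pi i1 i2 i3; pinned_by i1 i2 i3.
- case/pinned_consP => x1 [? ?] /pinned_consP [x2 [? ?] _].
  have [x3 ?] := @exists_val n pi (n - 1) ltac:(lia).
  by occ3_at pi x1 x2 x3.
Qed.

Lemma avoiders_123_01_123 : avoiders_nfact_sub (mk3 s123 [:: 0; 1] [:: 1; 2; 3]).
Proof.
apply: (avoiders_two_pins (s := fun n => [:: (0, n - 3); (1, n - 2)])) => // n n3.
  by pins_ok.
move=> pi; rewrite contains_123; apply/idP/idP.
- by intro_occ3 pi i1 i2 i3; pinned_by i1 i2 i3.
- case/pinned_consP => x1 [? ?] /pinned_consP [x2 [? ?] _].
  have [x3 ?] := @exists_val n pi (n - 1) ltac:(lia).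
  by occ3_at pi x1 x2 x3.
Qed.

Lemma avoiders_123_02_012 : avoiders_nfact_sub (mk3 s123 [:: 0; 2] [:: 0; 1; 2]).
Proof.
apply: (avoiders_pin_family (key := fun n t => (t.+1, 1))
         (rest := fun n t => [:: (0, 0); (t.+2, 2)])) => //.
- by move=> n t t' [].
- by right.
- by move=> n t n3 tn; pins_ok.
move=> n n3 pi; rewrite contains_123; apply/idP/idP.
- intro_occ3 pi i1 i2 i3.
  have [t ?] := @exists_pos (n - 2) i2.-1 ltac:(lia).
  by apply/existsP; exists t; pinned_by i1 i2 i3.
- case/existsP => t /pinned_consP [x2 [? ?]].
  case/pinned_consP => x1 [? ?] /pinned_consP [x3 [? ?] _].
  by have tn := ltn_ord t; occ3_at pi x1 x2 x3.
Qed.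

Lemma avoiders_123_02_013 : avoiders_nfact_sub (mk3 s123 [:: 0; 2] [:: 0; 1; 3]).
Proof.
apply: (avoiders_pin_family (key := fun n t => (t.+1, 1))
         (rest := fun n t => [:: (0, 0); (t.+2, n - 1)])) => //.
- by move=> n t t' [].
- by right.
- by move=> n t n3 tn; pins_ok.
move=> n n3 pi; rewrite contains_123; apply/idP/idP.
- intro_occ3 pi i1 i2 i3.
  have [t ?] := @exists_pos (n - 2) i2.-1 ltac:(lia).
  by apply/existsP; exists t; pinned_by i1 i2 i3.
- case/existsP => t /pinned_consP [x2 [? ?]].
  case/pinned_consP => x1 [? ?] /pinned_consP [x3 [? ?] _].
  by have tn := ltn_ord t; occ3_at pi x1 x2 x3.
Qed.

Lemma avoiders_123_02_023 : avoiders_nfact_sub (mk3 s123 [:: 0; 2] [:: 0; 2; 3]).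
Proof.
apply: (avoiders_pin_family (key := fun n t => (t.+1, n - 2))
         (rest := fun n t => [:: (0, 0); (t.+2, n - 1)])) => //.
- by move=> n t t' [].
- by right.
- by move=> n t n3 tn; pins_ok.
move=> n n3 pi; rewrite contains_123; apply/idP/idP.
- intro_occ3 pi i1 i2 i3.
  have [t ?] := @exists_pos (n - 2) i2.-1 ltac:(lia).
  by apply/existsP; exists t; pinned_by i1 i2 i3.
- case/existsP => t /pinned_consP [x2 [? ?]].
  case/pinned_consP => x1 [? ?] /pinned_consP [x3 [? ?] _].
  by have tn := ltn_ord t; occ3_at pi x1 x2 x3.
Qed.

Lemma avoiders_123_02_123 : avoiders_nfact_sub (mk3 s123 [:: 0; 2] [:: 1; 2; 3]).
Proof.
apply: (avoiders_pin_family (key := fun n t => (t.+1, n - 2))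
         (rest := fun n t => [:: (0, n - 3); (t.+2, n - 1)])) => //.
- by move=> n t t' [].
- by right.
- by move=> n t n3 tn; pins_ok.
move=> n n3 pi; rewrite contains_123; apply/idP/idP.
- intro_occ3 pi i1 i2 i3.
  have [t ?] := @exists_pos (n - 2) i2.-1 ltac:(lia).
  by apply/existsP; exists t; pinned_by i1 i2 i3.
- case/existsP => t /pinned_consP [x2 [? ?]].
  case/pinned_consP => x1 [? ?] /pinned_consP [x3 [? ?] _].
  by have tn := ltn_ord t; occ3_at pi x1 x2 x3.
Qed.

Lemma avoiders_123_12_012 : avoiders_nfact_sub (mk3 s123 [:: 1; 2] [:: 0; 1; 2]).
Proof.
apply: (avoiders_pin_family (key := fun n t => (t, 0))
         (rest := fun n t => [:: (t.+1, 1); (t.+2, 2)])) => //.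
- by move=> n t t' [].
- by right.
- by move=> n t n3 tn; pins_ok.
move=> n n3 pi; rewrite contains_123; apply/idP/idP.
- intro_occ3 pi i1 i2 i3.
  have [t ?] := @exists_pos (n - 2) i1 ltac:(lia).
  by apply/existsP; exists t; pinned_by i1 i2 i3.
- case/existsP => t /pinned_consP [x1 [? ?]].
  case/pinned_consP => x2 [? ?] /pinned_consP [x3 [? ?] _].
  by have tn := ltn_ord t; occ3_at pi x1 x2 x3.
Qed.

Lemma avoiders_123_12_013 : avoiders_nfact_sub (mk3 s123 [:: 1; 2] [:: 0; 1; 3]).
Proof.
apply: (avoiders_pin_family (key := fun n t => (t, 0))
         (rest := fun n t => [:: (t.+1, 1); (t.+2, n - 1)])) => //.
- by move=> n t t' [].
- by right.
- by move=> n t n3 tn; pins_ok.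
move=> n n3 pi; rewrite contains_123; apply/idP/idP.
- intro_occ3 pi i1 i2 i3.
  have [t ?] := @exists_pos (n - 2) i1 ltac:(lia).
  by apply/existsP; exists t; pinned_by i1 i2 i3.
- case/existsP => t /pinned_consP [x1 [? ?]].
  case/pinned_consP => x2 [? ?] /pinned_consP [x3 [? ?] _].
  by have tn := ltn_ord t; occ3_at pi x1 x2 x3.
Qed.

Lemma avoiders_123_012_03 : avoiders_nfact_sub (mk3 s123 [:: 0; 1; 2] [:: 0; 3]).
Proof.
apply: (avoiders_two_pins (s := fun n => [:: (0, 0); (2, n - 1)])) => // n n3.
  by pins_ok.
move=> pi; rewrite contains_123; apply/idP/idP.
- by intro_occ3 pi i1 i2 i3; pinned_by i1 i2 i3.
- case/pinned_consP => x1 [? ?] /pinned_consP [x3 [? ?] _].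
  have [x2 ?] := @exists_pos n 1 ltac:(lia).
  by occ3_at pi x1 x2 x3.
Qed.

Lemma avoiders_123_03_03 : avoiders_nfact_sub (mk3 s123 [:: 0; 3] [:: 0; 3]).
Proof.
apply: (avoiders_two_pins (s := fun n => [:: (0, 0); (n - 1, n - 1)])) => // n n3.
  by pins_ok.
move=> pi; rewrite contains_123; apply/idP/idP.
- by intro_occ3 pi i1 i2 i3; pinned_by i1 i2 i3.
- case/pinned_consP => x1 [? ?] /pinned_consP [x3 [? ?] _].
  have [x2 ?] := @exists_pos n 1 ltac:(lia).
  by occ3_at pi x1 x2 x3.
Qed.

Lemma avoiders_123_03_013 : avoiders_nfact_sub (mk3 s123 [:: 0; 3] [:: 0; 1; 3]).
Proof.
apply: (avoiders_two_pins (s := fun n => [:: (0, 0); (n - 1, n - 1)])) => // n n3.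
  by pins_ok.
move=> pi; rewrite contains_123; apply/idP/idP.
- by intro_occ3 pi i1 i2 i3; pinned_by i1 i2 i3.
- case/pinned_consP => x1 [? ?] /pinned_consP [x3 [? ?] _].
  have [x2 ?] := @exists_val n pi 1 ltac:(lia).
  by occ3_at pi x1 x2 x3.
Qed.

Lemma avoiders_132_01_012 : avoiders_nfact_sub (mk3 s132 [:: 0; 1] [:: 0; 1; 2]).
Proof.
apply: (avoiders_two_pins (s := fun n => [:: (0, 0); (1, 2)])) => // n n3.
  by pins_ok.
move=> pi; rewrite contains_132; apply/idP/idP.
- by intro_occ3 pi i1 i2 i3; pinned_by i1 i2 i3.
- case/pinned_consP => x1 [? ?] /pinned_consP [x2 [? ?] _].
  have [x3 ?] := @exists_val n pi 1 ltac:(lia).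
  by occ3_at pi x1 x2 x3.
Qed.

Lemma avoiders_132_01_03 : avoiders_nfact_sub (mk3 s132 [:: 0; 1] [:: 0; 3]).
Proof.
apply: (avoiders_two_pins (s := fun n => [:: (0, 0); (1, n - 1)])) => // n n3.
  by pins_ok.
move=> pi; rewrite contains_132; apply/idP/idP.
- by intro_occ3 pi i1 i2 i3; pinned_by i1 i2 i3.
- case/pinned_consP => x1 [? ?] /pinned_consP [x2 [? ?] _].
  have [x3 ?] := @exists_pos n 2 ltac:(lia).
  by occ3_at pi x1 x2 x3.
Qed.

Lemma avoiders_132_01_013 : avoiders_nfact_sub (mk3 s132 [:: 0; 1] [:: 0; 1; 3]).
Proof.
apply: (avoiders_two_pins (s := fun n => [:: (0, 0); (1, n - 1)])) => // n n3.
  by pins_ok.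
move=> pi; rewrite contains_132; apply/idP/idP.
- by intro_occ3 pi i1 i2 i3; pinned_by i1 i2 i3.
- case/pinned_consP => x1 [? ?] /pinned_consP [x2 [? ?] _].
  have [x3 ?] := @exists_val n pi 1 ltac:(lia).
  by occ3_at pi x1 x2 x3.
Qed.

Lemma avoiders_132_01_023 : avoiders_nfact_sub (mk3 s132 [:: 0; 1] [:: 0; 2; 3]).
Proof.
apply: (avoiders_two_pins (s := fun n => [:: (0, 0); (1, n - 1)])) => // n n3.
  by pins_ok.
move=> pi; rewrite contains_132; apply/idP/idP.
- by intro_occ3 pi i1 i2 i3; pinned_by i1 i2 i3.
- case/pinned_consP => x1 [? ?] /pinned_consP [x2 [? ?] _].
  have [x3 ?] := @exists_val n pi (n - 2) ltac:(lia).
  by occ3_at pi x1 x2 x3.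
Qed.

Lemma avoiders_132_01_123 : avoiders_nfact_sub (mk3 s132 [:: 0; 1] [:: 1; 2; 3]).
Proof.
apply: (avoiders_two_pins (s := fun n => [:: (0, n - 3); (1, n - 1)])) => // n n3.
  by pins_ok.
move=> pi; rewrite contains_132; apply/idP/idP.
- by intro_occ3 pi i1 i2 i3; pinned_by i1 i2 i3.
- case/pinned_consP => x1 [? ?] /pinned_consP [x2 [? ?] _].
  have [x3 ?] := @exists_val n pi (n - 2) ltac:(lia).
  by occ3_at pi x1 x2 x3.
Qed.

Lemma avoiders_132_02_012 : avoiders_nfact_sub (mk3 s132 [:: 0; 2] [:: 0; 1; 2]).
Proof.
apply: (avoiders_pin_family (key := fun n t => (t.+1, 2))
         (rest := fun n t => [:: (0, 0); (t.+2, 1)])) => //.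
- by move=> n t t' [].
- by right.
- by move=> n t n3 tn; pins_ok.
move=> n n3 pi; rewrite contains_132; apply/idP/idP.
- intro_occ3 pi i1 i2 i3.
  have [t ?] := @exists_pos (n - 2) i2.-1 ltac:(lia).
  by apply/existsP; exists t; pinned_by i1 i2 i3.
- case/existsP => t /pinned_consP [x2 [? ?]].
  case/pinned_consP => x1 [? ?] /pinned_consP [x3 [? ?] _].
  by have tn := ltn_ord t; occ3_at pi x1 x2 x3.
Qed.

Lemma avoiders_132_02_013 : avoiders_nfact_sub (mk3 s132 [:: 0; 2] [:: 0; 1; 3]).
Proof.
apply: (avoiders_pin_family (key := fun n t => (t.+1, n - 1))
         (rest := fun n t => [:: (0, 0); (t.+2, 1)])) => //.
- by move=> n t t' [].
- by right.
- by move=> n t n3 tn; pins_ok.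
move=> n n3 pi; rewrite contains_132; apply/idP/idP.
- intro_occ3 pi i1 i2 i3.
  have [t ?] := @exists_pos (n - 2) i2.-1 ltac:(lia).
  by apply/existsP; exists t; pinned_by i1 i2 i3.
- case/existsP => t /pinned_consP [x2 [? ?]].
  case/pinned_consP => x1 [? ?] /pinned_consP [x3 [? ?] _].
  by have tn := ltn_ord t; occ3_at pi x1 x2 x3.
Qed.

Lemma avoiders_132_02_023 : avoiders_nfact_sub (mk3 s132 [:: 0; 2] [:: 0; 2; 3]).
Proof.
apply: (avoiders_pin_family (key := fun n t => (t.+1, n - 1))
         (rest := fun n t => [:: (0, 0); (t.+2, n - 2)])) => //.
- by move=> n t t' [].
- by right.
- by move=> n t n3 tn; pins_ok.
move=> n n3 pi; rewrite contains_132; apply/idP/idP.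
- intro_occ3 pi i1 i2 i3.
  have [t ?] := @exists_pos (n - 2) i2.-1 ltac:(lia).
  by apply/existsP; exists t; pinned_by i1 i2 i3.
- case/existsP => t /pinned_consP [x2 [? ?]].
  case/pinned_consP => x1 [? ?] /pinned_consP [x3 [? ?] _].
  by have tn := ltn_ord t; occ3_at pi x1 x2 x3.
Qed.

Lemma avoiders_132_02_123 : avoiders_nfact_sub (mk3 s132 [:: 0; 2] [:: 1; 2; 3]).
Proof.
apply: (avoiders_pin_family (key := fun n t => (t.+1, n - 1))
         (rest := fun n t => [:: (0, n - 3); (t.+2, n - 2)])) => //.
- by move=> n t t' [].
- by right.
- by move=> n t n3 tn; pins_ok.
move=> n n3 pi; rewrite contains_132; apply/idP/idP.
- intro_occ3 pi i1 i2 i3.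
  have [t ?] := @exists_pos (n - 2) i2.-1 ltac:(lia).
  by apply/existsP; exists t; pinned_by i1 i2 i3.
- case/existsP => t /pinned_consP [x2 [? ?]].
  case/pinned_consP => x1 [? ?] /pinned_consP [x3 [? ?] _].
  by have tn := ltn_ord t; occ3_at pi x1 x2 x3.
Qed.

Lemma avoiders_132_12_012 : avoiders_nfact_sub (mk3 s132 [:: 1; 2] [:: 0; 1; 2]).
Proof.
apply: (avoiders_pin_family (key := fun n t => (t, 0))
         (rest := fun n t => [:: (t.+1, 2); (t.+2, 1)])) => //.
- by move=> n t t' [].
- by right.
- by move=> n t n3 tn; pins_ok.
move=> n n3 pi; rewrite contains_132; apply/idP/idP.
- intro_occ3 pi i1 i2 i3.
  have [t ?] := @exists_pos (n - 2) i1 ltac:(lia).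
  by apply/existsP; exists t; pinned_by i1 i2 i3.
- case/existsP => t /pinned_consP [x1 [? ?]].
  case/pinned_consP => x2 [? ?] /pinned_consP [x3 [? ?] _].
  by have tn := ltn_ord t; occ3_at pi x1 x2 x3.
Qed.

Lemma avoiders_132_12_013 : avoiders_nfact_sub (mk3 s132 [:: 1; 2] [:: 0; 1; 3]).
Proof.
apply: (avoiders_pin_family (key := fun n t => (t, 0))
         (rest := fun n t => [:: (t.+1, n - 1); (t.+2, 1)])) => //.
- by move=> n t t' [].
- by right.
- by move=> n t n3 tn; pins_ok.
move=> n n3 pi; rewrite contains_132; apply/idP/idP.
- intro_occ3 pi i1 i2 i3.
  have [t ?] := @exists_pos (n - 2) i1 ltac:(lia).
  by apply/existsP; exists t; pinned_by i1 i2 i3.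
- case/existsP => t /pinned_consP [x1 [? ?]].
  case/pinned_consP => x2 [? ?] /pinned_consP [x3 [? ?] _].
  by have tn := ltn_ord t; occ3_at pi x1 x2 x3.
Qed.

Lemma avoiders_132_12_023 : avoiders_nfact_sub (mk3 s132 [:: 1; 2] [:: 0; 2; 3]).
Proof.
apply: (avoiders_pin_family (key := fun n t => (t, 0))
         (rest := fun n t => [:: (t.+1, n - 1); (t.+2, n - 2)])) => //.
- by move=> n t t' [].
- by right.
- by move=> n t n3 tn; pins_ok.
move=> n n3 pi; rewrite contains_132; apply/idP/idP.
- intro_occ3 pi i1 i2 i3.
  have [t ?] := @exists_pos (n - 2) i1 ltac:(lia).
  by apply/existsP; exists t; pinned_by i1 i2 i3.
- case/existsP => t /pinned_consP [x1 [? ?]].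
  case/pinned_consP => x2 [? ?] /pinned_consP [x3 [? ?] _].
  by have tn := ltn_ord t; occ3_at pi x1 x2 x3.
Qed.

Lemma avoiders_132_12_123 : avoiders_nfact_sub (mk3 s132 [:: 1; 2] [:: 1; 2; 3]).
Proof.
apply: (avoiders_pin_family (key := fun n t => (t, n - 3))
         (rest := fun n t => [:: (t.+1, n - 1); (t.+2, n - 2)])) => //.
- by move=> n t t' [].
- by right.
- by move=> n t n3 tn; pins_ok.
move=> n n3 pi; rewrite contains_132; apply/idP/idP.
- intro_occ3 pi i1 i2 i3.
  have [t ?] := @exists_pos (n - 2) i1 ltac:(lia).
  by apply/existsP; exists t; pinned_by i1 i2 i3.
- case/existsP => t /pinned_consP [x1 [? ?]].
  case/pinned_consP => x2 [? ?] /pinned_consP [x3 [? ?] _].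
  by have tn := ltn_ord t; occ3_at pi x1 x2 x3.
Qed.

Lemma avoiders_132_012_03 : avoiders_nfact_sub (mk3 s132 [:: 0; 1; 2] [:: 0; 3]).
Proof.
apply: (avoiders_two_pins (s := fun n => [:: (0, 0); (1, n - 1)])) => // n n3.
  by pins_ok.
move=> pi; rewrite contains_132; apply/idP/idP.
- by intro_occ3 pi i1 i2 i3; pinned_by i1 i2 i3.
- case/pinned_consP => x1 [? ?] /pinned_consP [x2 [? ?] _].
  have [x3 ?] := @exists_pos n 2 ltac:(lia).
  by occ3_at pi x1 x2 x3.
Qed.

Lemma avoiders_132_012_13 : avoiders_nfact_sub (mk3 s132 [:: 0; 1; 2] [:: 1; 3]).
Proof.
apply: (avoiders_pin_family (key := fun n t => (0, t))
         (rest := fun n t => [:: (1, n - 1); (2, t.+1)])) => //.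
- by move=> n t t' [].
- by left.
- by move=> n t n3 tn; pins_ok.
move=> n n3 pi; rewrite contains_132; apply/idP/idP.
- intro_occ3 pi i1 i2 i3.
  have [t ?] := @exists_pos (n - 2) (pi i1) ltac:(lia).
  by apply/existsP; exists t; pinned_by i1 i2 i3.
- case/existsP => t /pinned_consP [x1 [? ?]].
  case/pinned_consP => x2 [? ?] /pinned_consP [x3 [? ?] _].
  by have tn := ltn_ord t; occ3_at pi x1 x2 x3.
Qed.

Lemma avoiders_132_012_23 : avoiders_nfact_sub (mk3 s132 [:: 0; 1; 2] [:: 2; 3]).
Proof.
apply: (avoiders_two_pins (s := fun n => [:: (1, n - 1); (2, n - 2)])) => // n n3.
  by pins_ok.
move=> pi; rewrite contains_132; apply/idP/idP.
- by intro_occ3 pi i1 i2 i3; pinned_by i1 i2 i3.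
- case/pinned_consP => x2 [? ?] /pinned_consP [x3 [? ?] _].
  have [x1 ?] := @exists_pos n 0 ltac:(lia).
  by occ3_at pi x1 x2 x3.
Qed.

Lemma avoiders_132_03_013 : avoiders_nfact_sub (mk3 s132 [:: 0; 3] [:: 0; 1; 3]).
Proof.
apply: (avoiders_two_pins (s := fun n => [:: (0, 0); (n - 1, 1)])) => // n n3.
  by pins_ok.
move=> pi; rewrite contains_132; apply/idP/idP.
- by intro_occ3 pi i1 i2 i3; pinned_by i1 i2 i3.
- case/pinned_consP => x1 [? ?] /pinned_consP [x3 [? ?] _].
  have [x2 ?] := @exists_val n pi (n - 1) ltac:(lia).
  by occ3_at pi x1 x2 x3.
Qed.

Lemma avoiders_132_03_023 : avoiders_nfact_sub (mk3 s132 [:: 0; 3] [:: 0; 2; 3]).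
Proof.
apply: (avoiders_two_pins (s := fun n => [:: (0, 0); (n - 1, n - 2)])) => // n n3.
  by pins_ok.
move=> pi; rewrite contains_132; apply/idP/idP.
- by intro_occ3 pi i1 i2 i3; pinned_by i1 i2 i3.
- case/pinned_consP => x1 [? ?] /pinned_consP [x3 [? ?] _].
  have [x2 ?] := @exists_val n pi (n - 1) ltac:(lia).
  by occ3_at pi x1 x2 x3.
Qed.

Lemma avoiders_132_03_123 : avoiders_nfact_sub (mk3 s132 [:: 0; 3] [:: 1; 2; 3]).
Proof.
apply: (avoiders_two_pins (s := fun n => [:: (0, n - 3); (n - 1, n - 2)])) => // n n3.
  by pins_ok.
move=> pi; rewrite contains_132; apply/idP/idP.
- by intro_occ3 pi i1 i2 i3; pinned_by i1 i2 i3.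
- case/pinned_consP => x1 [? ?] /pinned_consP [x3 [? ?] _].
  have [x2 ?] := @exists_val n pi (n - 1) ltac:(lia).
  by occ3_at pi x1 x2 x3.
Qed.

Lemma avoiders_132_13_013 : avoiders_nfact_sub (mk3 s132 [:: 1; 3] [:: 0; 1; 3]).
Proof.
apply: (avoiders_pin_family (key := fun n t => (t, 0))
         (rest := fun n t => [:: (t.+1, n - 1); (n - 1, 1)])) => //.
- by move=> n t t' [].
- by right.
- by move=> n t n3 tn; pins_ok.
move=> n n3 pi; rewrite contains_132; apply/idP/idP.
- intro_occ3 pi i1 i2 i3.
  have [t ?] := @exists_pos (n - 2) i1 ltac:(lia).
  by apply/existsP; exists t; pinned_by i1 i2 i3.
- case/existsP => t /pinned_consP [x1 [? ?]].
  case/pinned_consP => x2 [? ?] /pinned_consP [x3 [? ?] _].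
  by have tn := ltn_ord t; occ3_at pi x1 x2 x3.
Qed.

Lemma avoiders_132_13_023 : avoiders_nfact_sub (mk3 s132 [:: 1; 3] [:: 0; 2; 3]).
Proof.
apply: (avoiders_pin_family (key := fun n t => (t, 0))
         (rest := fun n t => [:: (t.+1, n - 1); (n - 1, n - 2)])) => //.
- by move=> n t t' [].
- by right.
- by move=> n t n3 tn; pins_ok.
move=> n n3 pi; rewrite contains_132; apply/idP/idP.
- intro_occ3 pi i1 i2 i3.
  have [t ?] := @exists_pos (n - 2) i1 ltac:(lia).
  by apply/existsP; exists t; pinned_by i1 i2 i3.
- case/existsP => t /pinned_consP [x1 [? ?]].
  case/pinned_consP => x2 [? ?] /pinned_consP [x3 [? ?] _].
  by have tn := ltn_ord t; occ3_at pi x1 x2 x3.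
Qed.

Lemma avoiders_132_13_123 : avoiders_nfact_sub (mk3 s132 [:: 1; 3] [:: 1; 2; 3]).
Proof.
apply: (avoiders_pin_family (key := fun n t => (t, n - 3))
         (rest := fun n t => [:: (t.+1, n - 1); (n - 1, n - 2)])) => //.
- by move=> n t t' [].
- by right.
- by move=> n t n3 tn; pins_ok.
move=> n n3 pi; rewrite contains_132; apply/idP/idP.
- intro_occ3 pi i1 i2 i3.
  have [t ?] := @exists_pos (n - 2) i1 ltac:(lia).
  by apply/existsP; exists t; pinned_by i1 i2 i3.
- case/existsP => t /pinned_consP [x1 [? ?]].
  case/pinned_consP => x2 [? ?] /pinned_consP [x3 [? ?] _].
  by have tn := ltn_ord t; occ3_at pi x1 x2 x3.
Qed.

Lemma avoiders_132_013_23 : avoiders_nfact_sub (mk3 s132 [:: 0; 1; 3] [:: 2; 3]).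
Proof.
apply: (avoiders_two_pins (s := fun n => [:: (1, n - 1); (n - 1, n - 2)])) => // n n3.
  by pins_ok.
move=> pi; rewrite contains_132; apply/idP/idP.
- by intro_occ3 pi i1 i2 i3; pinned_by i1 i2 i3.
- case/pinned_consP => x2 [? ?] /pinned_consP [x3 [? ?] _].
  have [x1 ?] := @exists_pos n 0 ltac:(lia).
  by occ3_at pi x1 x2 x3.
Qed.

Lemma avoiders_132_23_23 : avoiders_nfact_sub (mk3 s132 [:: 2; 3] [:: 2; 3]).
Proof.
apply: (avoiders_two_pins (s := fun n => [:: (n - 2, n - 1); (n - 1, n - 2)])) => // n n3.
  by pins_ok.
move=> pi; rewrite contains_132; apply/idP/idP.
- by intro_occ3 pi i1 i2 i3; pinned_by i1 i2 i3.
- case/pinned_consP => x2 [? ?] /pinned_consP [x3 [? ?] _].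
  have [x1 ?] := @exists_pos n 0 ltac:(lia).
  by occ3_at pi x1 x2 x3.
Qed.

Lemma avoiders_132_23_023 : avoiders_nfact_sub (mk3 s132 [:: 2; 3] [:: 0; 2; 3]).
Proof.
apply: (avoiders_two_pins (s := fun n => [:: (n - 2, n - 1); (n - 1, n - 2)])) => // n n3.
  by pins_ok.
move=> pi; rewrite contains_132; apply/idP/idP.
- by intro_occ3 pi i1 i2 i3; pinned_by i1 i2 i3.
- case/pinned_consP => x2 [? ?] /pinned_consP [x3 [? ?] _].
  have [x1 ?] := @exists_val n pi 0 ltac:(lia).
  by occ3_at pi x1 x2 x3.
Qed.

Lemma avoiders_132_23_123 : avoiders_nfact_sub (mk3 s132 [:: 2; 3] [:: 1; 2; 3]).
Proof.
apply: (avoiders_two_pins (s := fun n => [:: (n - 2, n - 1); (n - 1, n - 2)])) => // n n3.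
  by pins_ok.
move=> pi; rewrite contains_132; apply/idP/idP.
- by intro_occ3 pi i1 i2 i3; pinned_by i1 i2 i3.
- case/pinned_consP => x2 [? ?] /pinned_consP [x3 [? ?] _].
  have [x1 ?] := @exists_val n pi (n - 3) ltac:(lia).
  by occ3_at pi x1 x2 x3.
Qed.

Lemma base_pats_avoiders : List.Forall avoiders_nfact_sub base_pats.
Proof.
repeat constructor;
  [ exact: avoiders_123_01_01 | exact: avoiders_123_01_012
  | exact: avoiders_123_01_013 | exact: avoiders_123_01_023
  | exact: avoiders_123_01_123 | exact: avoiders_123_02_012
  | exact: avoiders_123_02_013 | exact: avoiders_123_02_023
  | exact: avoiders_123_02_123 | exact: avoiders_123_12_012
  | exact: avoiders_123_12_013 | exact: avoiders_123_012_03
  | exact: avoiders_123_03_03 | exact: avoiders_123_03_013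
  | exact: avoiders_132_01_012 | exact: avoiders_132_01_03
  | exact: avoiders_132_01_013 | exact: avoiders_132_01_023
  | exact: avoiders_132_01_123 | exact: avoiders_132_02_012
  | exact: avoiders_132_02_013 | exact: avoiders_132_02_023
  | exact: avoiders_132_02_123 | exact: avoiders_132_12_012
  | exact: avoiders_132_12_013 | exact: avoiders_132_12_023
  | exact: avoiders_132_12_123 | exact: avoiders_132_012_03
  | exact: avoiders_132_012_13 | exact: avoiders_132_012_23
  | exact: avoiders_132_03_013 | exact: avoiders_132_03_023
  | exact: avoiders_132_03_123 | exact: avoiders_132_13_013
  | exact: avoiders_132_13_023 | exact: avoiders_132_13_123
  | exact: avoiders_132_013_23 | exact: avoiders_132_23_23
  | exact: avoiders_132_23_023 | exact: avoiders_132_23_123 ].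
Qed.

Unset Implicit Arguments.

Theorem mainTheorem19 (b p : bvpat) :
  List.In b base_pats -> in_symclass b p ->
  forall n : nat, 3 <= n -> avoiders_count p n = n`! - (n - 2)`!.
Proof.
move=> b_base b_p n n3; rewrite (avoiders_count_symclass n b_p).
by move/List.Forall_forall: base_pats_avoiders => /(_ b b_base); apply.
Qed.
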